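(* Let $A$ be a finite set with $|A|\ge 2$, $n\ge 2$, and let $\mathcal{I}\subseteq\mathrm{Sym}(A^n)$ be the set of instructions. Then the set of permutations $f\in\mathrm{Sym}(A^n)$ such that $f^{-1}gf\in\mathcal{I}$ for every $g\in\mathcal{I}$ is exactly the group $U$ of unary permutations of $A^n$, which equals $\mathrm{Sym}(A)\wr\mathrm{Sym}(n)$. In other words, $U$ is the largest subgroup of $\mathrm{Sym}(A^n)$ acting on $\mathcal{I}$ by conjugation.
   Context: Any $f\in\mathrm{Sym}(A^n)$ is written $f(x)=(f_1(x),\ldots,f_n(x))$ with coordinate functions $f_i:A^n\to A$; the $i$-th coordinate function is trivial if $f_i(x)=x_i$ for all $x$. An instruction is a permutation of $A^n$ with at most one nontrivial coordinate function (the identity counts as an instruction). A permutation $f$ of $A^n$ is unary if each coordinate function $f_i$ depends on at most one variable. The wreath product $\mathrm{Sym}(A)\wr\mathrm{Sym}(n)$ acts on $A^n$ by permuting coordinates and applying permutations of $A$ independently in each coordinate. *)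

From mathcomp Require Import all_boot all_fingroup.
Set Implicit Arguments. Unset Strict Implicit. Unset Printing Implicit Defensive.
Local Open Scope group_scope.

Definition cube (A : finType) (n : nat) : finType := {ffun 'I_n -> A}.

Definition trivial_coord (A : finType) (n : nat) (f : {perm cube A n}) (i : 'I_n) : Prop :=
  forall x : cube A n, f x i = x i.

Definition instruction (A : finType) (n : nat) (f : {perm cube A n}) : Prop :=
  exists i : 'I_n, forall j : 'I_n, j != i -> trivial_coord f j.

Definition depends_on_at_most_one (A : finType) (n : nat) (h : cube A n -> A) : Prop :=
  exists j : 'I_n, forall x y : cube A n, x j = y j -> h x = h y.

Definition unary (A : finType) (n : nat) (f : {perm cube A n}) : Prop :=
  forall i : 'I_n, depends_on_at_most_one (fun x => f x i).

(* f lies in (the image of) Sym(A) wr Sym(n) acting on A^n: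
   f(x)_i = s_i (x_{pi i}) *)
Definition in_wreath (A : finType) (n : nat) (f : {perm cube A n}) : Prop :=
  exists (pi : 'S_n) (s : 'I_n -> {perm A}),
    forall (x : cube A n) (i : 'I_n), f x i = s i (x (pi i)).

Definition normalizes_instructions (A : finType) (n : nat) (f : {perm cube A n}) : Prop :=
  forall g : {perm cube A n}, instruction g -> instruction (f^-1 * g * f).

From mathcomp Require Import all_boot all_fingroup.
Set Implicit Arguments. Unset Strict Implicit. Unset Printing Implicit Defensive.

(* Conjugation by an element of Sym(A) wr Sym(n) with coordinate permutation pi
   sends instructions at coordinate i to instructions at pi^-1 i, and such an
   element is clearly unary. Conversely, let f normalize the instructions. A
   transposition of two points differing only at coordinate i is an instruction
   at i, and nontrivial instructions at distinct coordinates never multiply to an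
   instruction; comparing the conjugates of two such transpositions yields a
   coordinate s i such that changing x_i changes f x at most at coordinate s i.
   As f is bijective no coordinate of f is constant, so s is onto, hence a
   permutation, and coordinate s j of f depends on x_j alone. For a unary
   permutation, bijectivity likewise forces distinct coordinates to depend on
   distinct variables through injective maps of A. *)

Lemma onto_inj (T : finType) (f : T -> T) : (forall y, y \in codom f) -> injective f.
Proof.
move=> onto_f; have /image_injP inj_f : #|codom f| == #|T|.
  by apply/eqP/eq_card => y; rewrite onto_f.
exact: in2T.
Qed.

Lemma card_gt1_exists_neq (T : finType) : 1 < #|T| -> forall a : T, exists b, b != a.
Proof.
case/card_gt1P=> [a0 [a1 [_ _ a01]]] a.
by case: (eqVneq a a0) => [->|aa0]; [exists a1; rewrite eq_sym | exists a0; rewrite eq_sym].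
Qed.

Lemma tperm_neq1 (T : finType) (u v : T) : u != v -> tperm u v != 1%g.
Proof.
apply: contraNneq => uv1; have := tpermL u v.
by rewrite uv1 perm1 => ->.
Qed.

Section Cube.

Variables (A : finType) (n : nat).
Implicit Types (x y : cube A n) (f g : {perm cube A n}) (i j k l : 'I_n).
Local Open Scope group_scope.

Definition upd x i (b : A) : cube A n := [ffun j => if j == i then b else x j].

Lemma upd_id x i : upd x i (x i) = x.
Proof. by apply/ffunP => j; rewrite ffunE; case: eqP => [->|]. Qed.

Lemma upd_neq x i b : b != x i -> upd x i b != x.
Proof. by move=> bx; apply: contraNneq bx => <-; rewrite ffunE eqxx. Qed.

Lemma perm_upd_neq f x i b : b != x i -> f (upd x i b) != f x.
Proof. by rewrite (inj_eq perm_inj); apply: upd_neq. Qed.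

Lemma perm_coord_nonconst f k : 1 < #|A| -> ~ (forall x y, f x k = f y k).
Proof.
move=> hA const_fk; have /card_gt0P [a0 _] := ltnW hA.
pose x0 : cube A n := [ffun=> a0].
have [b b_neq] := card_gt1_exists_neq hA (f x0 k).
have := const_fk (f^-1 (upd (f x0) k b)) x0.
by rewrite permKV ffunE eqxx => /eqP; rewrite (negbTE b_neq).
Qed.

Lemma eq_coords_off T (h : cube A n -> T) (P : pred 'I_n) :
  (forall x i b, P i -> h (upd x i b) = h x) ->
  forall x y, (forall i, ~~ P i -> x i = y i) -> h x = h y.
Proof.
move=> hP x y eq_off_P.
pose merge (s : seq 'I_n) : cube A n := [ffun j => if j \in s then y j else x j].
have merge_P s : all P s -> h (merge s) = h x.
  elim: s => [_|i s IHs] /=; first by congr h; apply/ffunP => j; rewrite ffunE.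
  case/andP=> Pi /IHs <-; rewrite -(hP (merge s) i (y i) Pi); congr h.
  by apply/ffunP => j; rewrite !ffunE in_cons; case: eqP => [->|].
rewrite -(merge_P (enum P)); last by apply/allP => i; rewrite mem_enum.
congr h; apply/ffunP => j; rewrite ffunE mem_enum.
by case: ifP => // /negbT /eq_off_P.
Qed.

Definition instruction_at f i := forall j, j != i -> trivial_coord f j.

Lemma trivial_coords_eq1 f : (forall j, trivial_coord f j) -> f = 1.
Proof. by move=> trivial_f; apply/permP => x; apply/ffunP => j; rewrite perm1 trivial_f. Qed.

Lemma instruction_atM f g i :
  instruction_at f i -> instruction_at g i -> instruction_at (f * g) i.
Proof. by move=> fi gi j ji x; rewrite permM gi // fi. Qed.

Lemma instruction_at_tperm_upd x i b : instruction_at (tperm x (upd x i b)) i.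
Proof.
by move=> j ji z; case: tpermP => [->|->|_ _]; rewrite ?ffunE ?(negbTE ji).
Qed.

Lemma instruction_at_tperm x y k :
  instruction_at (tperm x y) k -> forall l, l != k -> y l = x l.
Proof. by move=> xyk l lk; rewrite -{1}(tpermL x y); apply: xyk. Qed.

(* If f acts at j and g at k != j, the coordinate j of f * g is that of f and
   its coordinate k is that of g, so f * g acts at two coordinates. *)
Lemma instructionM_two_coords f g j k :
  j != k -> f != 1 -> g != 1 ->
  instruction_at f j -> instruction_at g k -> ~ instruction (f * g).
Proof.
move=> jk f_neq1 g_neq1 fj gk [m fgm].
have kj : k != j by rewrite eq_sym.
case: (eqVneq m j) => [mj|mj].
- case/eqP: g_neq1; apply: trivial_coords_eq1 => l x.
  case: (eqVneq l k) => [->|lk]; last exact: gk.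
  have km : k != m by rewrite mj.
  have := fgm k km (f^-1 x); rewrite permM permKV => ->.
  by have := fj k kj (f^-1 x); rewrite permKV.
- case/eqP: f_neq1; apply: trivial_coords_eq1 => l x.
  case: (eqVneq l j) => [->|lj]; last exact: fj.
  have jm : j != m by rewrite eq_sym.
  by have := fgm j jm x; rewrite permM gk.
Qed.

Section Normalizer.

Variable f : {perm cube A n}.
Hypothesis f_normalizes : normalizes_instructions f.

Lemma normalizes_tperm_upd x i b :
  exists k, instruction_at (tperm (f x) (f (upd x i b))) k.
Proof.
have : instruction (tperm x (upd x i b)) by exists i; apply: instruction_at_tperm_upd.
by move/f_normalizes; rewrite -mulgA -conjgE tpermJ.
Qed.

Lemma normalizes_upd_one_coord i :
  1 < #|A| -> exists k, forall x b l, l != k -> f (upd x i b) l = f x l.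
Proof.
move=> hA; have /card_gt0P [a0 _] := ltnW hA.
pose x0 : cube A n := [ffun=> a0].
have [a1 a1_neq] := card_gt1_exists_neq hA a0.
have [k g0k] := normalizes_tperm_upd x0 i a1.
exists k => x b l lk.
have [->|bx] := eqVneq b (x i); first by rewrite upd_id.
have [m gm] := normalizes_tperm_upd x i b.
have [km|km] := eqVneq k m; first by rewrite km in lk; exact: (instruction_at_tperm gm lk).
(* the product of the two transpositions is an instruction at i, unlike its conjugate *)
have g0g : instruction (tperm x0 (upd x0 i a1) * tperm x (upd x i b)).
  by exists i; apply: instruction_atM; apply: instruction_at_tperm_upd.
case: (instructionM_two_coords km _ _ g0k gm).
- by apply: tperm_neq1; rewrite eq_sym perm_upd_neq // ffunE.
- by apply: tperm_neq1; rewrite eq_sym perm_upd_neq.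
- by have := f_normalizes g0g; rewrite -mulgA -conjgE conjMg !tpermJ.
Qed.

Lemma normalizes_unary : 1 < #|A| -> unary f.
Proof.
move=> hA; have [s s_moves] := fin_all_exists (normalizes_upd_one_coord^~ hA).
have s_onto k : k \in codom s.
  apply: contraT => s'k; have [] := @perm_coord_nonconst f k hA.
  move=> x y; apply: (@eq_coords_off _ (fun z => f z k) predT) => [z i b _|//].
  by apply: s_moves; apply: contraNneq s'k => ->; apply: codom_f.
have s_inj := onto_inj s_onto.
move=> k; have /codomP [j ->] := s_onto k; exists j => x y xy_j.
apply: (@eq_coords_off _ (fun z => f z (s j)) (predC1 j)).
  by move=> z i b ij; apply: s_moves; rewrite (inj_eq s_inj) eq_sym.
by move=> i /negPn/eqP ->.
Qed.

End Normalizer.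

Lemma wreath_normalizes f : in_wreath f -> normalizes_instructions f.
Proof.
move=> [pi [s fE]] g [i gi]; exists (pi^-1 i) => k ki y.
have pik : pi k != i by apply: contraNneq ki => <-; rewrite permK.
by rewrite !permM fE (gi (pi k) pik) -fE permKV.
Qed.

Lemma wreath_unary f : in_wreath f -> unary f.
Proof. by move=> [pi [s fE]] i; exists (pi i) => x y xy_pi; rewrite !fE xy_pi. Qed.

Lemma unary_wreath f : 1 < #|A| -> unary f -> in_wreath f.
Proof.
move=> hA f_unary; have [p fp] := fin_all_exists f_unary.
have /card_gt0P [a0 _] := ltnW hA.
have p_onto j : j \in codom p.
  apply: contraT => p'j; pose x0 : cube A n := [ffun=> a0].
  have [b b_neq] := card_gt1_exists_neq hA (x0 j).
  have /negP[] := perm_upd_neq f b_neq.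
  apply/eqP/ffunP => i; apply: fp; rewrite ffunE; case: eqP => // pij.
  by rewrite -pij codom_f in p'j.
have p_inj := onto_inj p_onto.
pose h i (a : A) := f [ffun=> a] i.
have fh x i : f x i = h i (x (p i)) by apply: fp; rewrite ffunE.
have h_inj i : injective (h i).
  move=> a a' haa'; apply/eqP; apply: contraT => neq.
  pose x : cube A n := [ffun=> a].
  have /negP[] : f (upd x (p i) a') != f x by apply: perm_upd_neq; rewrite ffunE eq_sym.
  apply/eqP/ffunP => l; rewrite !fh !ffunE (inj_eq p_inj).
  by case: eqP => [->|].
by exists (perm p_inj), (fun i => perm (h_inj i)) => x i; rewrite !permE fh.
Qed.

End Cube.

Theorem proposition1 (A : finType) (n : nat) :
  1 < #|A| -> 1 < n ->
  (forall f : {perm cube A n}, normalizes_instructions f <-> unary f) /\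
  (forall f : {perm cube A n}, unary f <-> in_wreath f).
Proof.
move=> hA _; split=> f; split.
- by move=> f_normalizes; exact: normalizes_unary f_normalizes hA.
- by move/(unary_wreath hA)/wreath_normalizes.
- exact: unary_wreath.
- exact: wreath_unary.
Qed.
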